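(* Fix $\mu\in\mathcal P$ and a sample set $\{y^1,\dots,y^N\}\subset\Xi$, $N\ge2$. With all quantities defined as in the context (evaluated at $(y^n,\mu)$ for each sample), \begin{align*} &\big|V[l(u)]-V[l(u^R)]+V[r(u^R_{(1)})]+\underline E[r(u^R_{(2)})]-\underline E[r(u^R_{(3)})]-E[r(u^R_{(4)})]\big|\\ &\le \underline E\Big[\frac{\|r\|_{X'}^2\|r_{(1)}\|_{X'}^2}{\alpha^2}\Big]+E\Big[\frac{\|r\|_{X'}\|r_{(1)}\|_{X'}}{\alpha}\Big]\,\underline E\Big[\frac{\|r\|_{X'}\|r_{(1)}\|_{X'}}{\alpha}\Big] +\underline E\Big[\frac{\big\|r_{(2)}-r_{(3)}-\frac{N-1}{N}r_{(4)}\big\|_{X'}\,\|r\|_{X'}}{\alpha}\Big]. \end{align*}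
   Context: $X$ is a real separable Hilbert space; $\Xi\subset\mathbb R^K$ and $\mathcal P\subset\mathbb R^P$ are parameter domains. For each $(y,\mu)$, $a(\cdot,\cdot;y,\mu)$ is a bounded bilinear form on $X\times X$, coercive with coercivity factor $\alpha(y,\mu):=\inf_{v\ne0}a(v,v;y,\mu)/\|v\|_X^2>0$, and $f(\cdot;y,\mu)$, $l(\cdot;y,\mu)$ are bounded linear forms on $X$. Dual norm $\|F\|_{X'}:=\sup_{v\ne0}|F(v)|/\|v\|_X$. For a function $g$ of $y$ and samples $y^1,\dots,y^N$, define $E[g]:=\frac1N\sum_{n}g(y^n)$, $\underline E[g]:=\frac1{N-1}\sum_n g(y^n)$, $V[g]:=\underline E[g^2]-\underline E[g]E[g]$. Fix subspaces $X^R,X^R_{(1)},\dots,X^R_{(4)}\subset X$. For each $(y,\mu)$ (forms evaluated at $(y,\mu)$): $u\in X$ solves $a(u,v)=f(v)$ $\forall v\in X$; $u^R\in X^R$ solves $a(u^R,v)=f(v)$ $\forall v\in X^R$; residual $r(\cdot):=f(\cdot)-a(u^R,\cdot)$. Linear forms: $l_{(1)}(\cdot):=l(\cdot)$; $l_{(2)}(\cdot):=2\big(l(u^R)-r(u^R_{(1)})\big)l(\cdot)$; $l_{(3)}(\cdot):=E\big[l(u^R)-r(u^R_{(1)})\big]\,l(\cdot)$; $l_{(4)}(\cdot):=\underline E\big[l(u^R)-r(u^R_{(1)})\big]\,l(\cdot)$, where in $l_{(3)},l_{(4)}$ the Monte Carlo means are taken over the samples (so they are scalars independent of $y$). For $i=1,\dots,4$,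 $u^R_{(i)}\in X^R_{(i)}$ solves $a(v,u^R_{(i)})=-l_{(i)}(v)$ for all $v\in X^R_{(i)}$ (defined successively), and $r_{(i)}(\cdot):=-l_{(i)}(\cdot)-a(\cdot,u^R_{(i)})$. *)

From Stdlib Require Import Reals Lra ClassicalEpsilon.
Open Scope R_scope.

Record Hilbert := {
  hcar :> Type;
  hzero : hcar;
  hadd : hcar -> hcar -> hcar;
  hopp : hcar -> hcar;
  hscal : R -> hcar -> hcar;
  hinner : hcar -> hcar -> R;
  hadd_assoc : forall x y z, hadd x (hadd y z) = hadd (hadd x y) z;
  hadd_comm : forall x y, hadd x y = hadd y x;
  hadd_0 : forall x, hadd x hzero = x;
  hadd_opp : forall x, hadd x (hopp x) = hzero;
  hscal_assoc : forall a b x, hscal a (hscal b x) = hscal (a * b) x;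
  hscal_1 : forall x, hscal 1 x = x;
  hscal_distr_v : forall a x y, hscal a (hadd x y) = hadd (hscal a x) (hscal a y);
  hscal_distr_s : forall a b x, hscal (a + b) x = hadd (hscal a x) (hscal b x);
  hinner_sym : forall x y, hinner x y = hinner y x;
  hinner_add_l : forall x y z, hinner (hadd x y) z = hinner x z + hinner y z;
  hinner_scal_l : forall a x y, hinner (hscal a x) y = a * hinner x y;
  hinner_nonneg : forall x, 0 <= hinner x x;
  hinner_def : forall x, hinner x x = 0 -> x = hzero;
  hcomplete : forall s : nat -> hcar,
    (forall eps, eps > 0 -> exists M, forall m n, (m >= M)%nat -> (n >= M)%nat ->
       sqrt (hinner (hadd (s m) (hopp (s n))) (hadd (s m) (hopp (s n)))) < eps) ->
    exists x, forall eps, eps > 0 -> exists M, forall n, (n >= M)%nat ->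
       sqrt (hinner (hadd (s n) (hopp x)) (hadd (s n) (hopp x))) < eps;
  hseparable : exists d : nat -> hcar, forall x eps, eps > 0 -> exists n,
       sqrt (hinner (hadd x (hopp (d n))) (hadd x (hopp (d n)))) < eps
}.

Arguments hzero {_}.
Arguments hadd {_}.
Arguments hopp {_}.
Arguments hscal {_}.
Arguments hinner {_}.

Definition hnorm {X : Hilbert} (x : X) : R := sqrt (hinner x x).

Definition Rsup (E : R -> Prop) : R := epsilon (inhabits 0) (is_lub E).

(* dual norm ||F||_{X'} = sup_{v<>0} |F v| / ||v||  (0 if X = {0}) *)
Definition dual_norm {X : Hilbert} (F : X -> R) : R :=
  Rsup (fun t => t = 0 \/ exists v : X, v <> hzero /\ t = Rabs (F v) / hnorm v).

(* coercivity factor alpha = inf_{v<>0} a(v,v)/||v||^2 *)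
Definition coercivity_factor {X : Hilbert} (a : X -> X -> R) : R :=
  - Rsup (fun t => exists v : X, v <> hzero /\ t = - (a v v / (hnorm v) ^ 2)).

Definition is_linear_form {X : Hilbert} (F : X -> R) : Prop :=
  (forall x y, F (hadd x y) = F x + F y) /\ (forall c x, F (hscal c x) = c * F x).

Definition bounded_linear_form {X : Hilbert} (F : X -> R) : Prop :=
  is_linear_form F /\ exists C, forall v, Rabs (F v) <= C * hnorm v.

Definition bounded_bilinear_form {X : Hilbert} (a : X -> X -> R) : Prop :=
  (forall v, is_linear_form (fun u => a u v)) /\
  (forall u, is_linear_form (fun v => a u v)) /\
  exists C, forall u v, Rabs (a u v) <= C * hnorm u * hnorm v.

Definition coercive {X : Hilbert} (a : X -> X -> R) : Prop :=
  exists c, c > 0 /\ forall v, a v v >= c * (hnorm v) ^ 2.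

Definition is_subspace {X : Hilbert} (S : X -> Prop) : Prop :=
  S hzero /\ (forall x y, S x -> S y -> S (hadd x y)) /\
  (forall c x, S x -> S (hscal c x)).

Fixpoint sumN (N : nat) (g : nat -> R) : R :=
  match N with O => 0 | S n => sumN n g + g n end.

Definition MC_E (N : nat) (g : nat -> R) : R := sumN N g / INR N.
Definition MC_Eu (N : nat) (g : nat -> R) : R := sumN N g / (INR N - 1).
Definition MC_V (N : nat) (g : nat -> R) : R :=
  MC_Eu N (fun n => g n ^ 2) - MC_Eu N g * MC_E N g.

From Stdlib Require Import Reals Lra Lia ClassicalEpsilon.
From Stdlib Require Vectors.Fin.
Open Scope R_scope.

(* Write e := u - u^R. Exactness of u gives the error equation a(e, v) = r(v), so coercivity
   yields ||e|| <= ||r||/alpha, hence |F(e)| <= ||F|| ||r||/alpha for every bounded form F.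
   Testing the dual problems with e gives l(u) = s - d with s := l(u^R) - r(u^R_(1)) and
   d := r_(1)(e), and r(u^R_(i)) = k_i (d + r(u^R_(1))) - r_(i)(e), where k_i is the scalar
   with l_(i) = k_i l. The sample variance is the quadratic form of the sample covariance
   Eu[g h] - Eu[g] E[h], and with this the left-hand side collapses to the exact identity
   V[d] - Eu[r_(2)(e) - r_(3)(e) - (N-1)/N r_(4)(e)]; both terms are then bounded by the
   error estimate. *)

Lemma sumN_ext (N : nat) (g h : nat -> R) :
  (forall n, (n < N)%nat -> g n = h n) -> sumN N g = sumN N h.
Proof.
  induction N as [|M IH]; intros Hgh; simpl; [reflexivity|].
  rewrite IH, Hgh; [reflexivity | lia | intros; apply Hgh; lia].
Qed.

Lemma sumN_le (N : nat) (g h : nat -> R) :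
  (forall n, (n < N)%nat -> g n <= h n) -> sumN N g <= sumN N h.
Proof.
  induction N as [|M IH]; intros Hgh; simpl; [lra|].
  apply Rplus_le_compat; [apply IH; intros; apply Hgh|apply Hgh]; lia.
Qed.

Lemma Rabs_sumN_le (N : nat) (g : nat -> R) :
  Rabs (sumN N g) <= sumN N (fun n => Rabs (g n)).
Proof.
  induction N as [|M IH]; simpl; [rewrite Rabs_R0; lra|].
  eapply Rle_trans; [apply Rabs_triang|lra].
Qed.

Lemma sumN_plus (N : nat) (g h : nat -> R) :
  sumN N (fun n => g n + h n) = sumN N g + sumN N h.
Proof. induction N as [|M IH]; simpl; [ring|rewrite IH; ring]. Qed.

Lemma sumN_minus (N : nat) (g h : nat -> R) :
  sumN N (fun n => g n - h n) = sumN N g - sumN N h.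
Proof. induction N as [|M IH]; simpl; [ring|rewrite IH; ring]. Qed.

Lemma sumN_scal (N : nat) (k : R) (g : nat -> R) :
  sumN N (fun n => k * g n) = k * sumN N g.
Proof. induction N as [|M IH]; simpl; [ring|rewrite IH; ring]. Qed.

Section MonteCarlo.

Variable N : nat.

Definition MC_cov (g h : nat -> R) : R :=
  MC_Eu N (fun n => g n * h n) - MC_Eu N g * MC_E N h.

Lemma MC_E_ext (g h : nat -> R) :
  (forall n, (n < N)%nat -> g n = h n) -> MC_E N g = MC_E N h.
Proof. intros; unfold MC_E; rewrite (sumN_ext N g h); auto. Qed.

Lemma MC_Eu_ext (g h : nat -> R) :
  (forall n, (n < N)%nat -> g n = h n) -> MC_Eu N g = MC_Eu N h.
Proof. intros; unfold MC_Eu; rewrite (sumN_ext N g h); auto. Qed.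

Lemma MC_V_ext (g h : nat -> R) :
  (forall n, (n < N)%nat -> g n = h n) -> MC_V N g = MC_V N h.
Proof.
  intros Hgh; unfold MC_V.
  rewrite (MC_Eu_ext g h), (MC_E_ext g h), (MC_Eu_ext (fun n => g n ^ 2) (fun n => h n ^ 2));
    auto.
  intros n Hn; rewrite Hgh; auto.
Qed.

Lemma MC_V_cov (g : nat -> R) : MC_V N g = MC_cov g g.
Proof.
  unfold MC_V, MC_cov; f_equal.
  apply MC_Eu_ext; intros; ring.
Qed.

Lemma MC_cov_minusl (g h k : nat -> R) :
  MC_cov (fun n => g n - h n) k = MC_cov g k - MC_cov h k.
Proof.
  unfold MC_cov, MC_Eu, MC_E, Rdiv.
  rewrite (sumN_ext N _ (fun n => g n * k n - h n * k n)) by (intros; ring).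
  rewrite !sumN_minus; ring.
Qed.

Lemma MC_cov_plusr (g h k : nat -> R) :
  MC_cov g (fun n => h n + k n) = MC_cov g h + MC_cov g k.
Proof.
  unfold MC_cov, MC_Eu, MC_E, Rdiv.
  rewrite (sumN_ext N _ (fun n => g n * h n + g n * k n)) by (intros; ring).
  rewrite !sumN_plus; ring.
Qed.

Lemma MC_V_minus (g h : nat -> R) :
  MC_V N (fun n => g n - h n) = MC_V N g - 2 * MC_cov g h + MC_V N h.
Proof.
  unfold MC_V, MC_cov, MC_Eu, MC_E, Rdiv.
  rewrite (sumN_ext N _ (fun n => g n ^ 2 - 2 * (g n * h n) + h n ^ 2)) by (intros; ring).
  rewrite sumN_plus, !sumN_minus, sumN_scal; ring.
Qed.

Hypothesis HN : (2 <= N)%nat.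

Let INR_N_ge2 : 2 <= INR N.
Proof. replace 2 with (INR 2) by (simpl; ring); apply le_INR, HN. Qed.

Lemma Rabs_MC_E_le (g b : nat -> R) :
  (forall n, (n < N)%nat -> Rabs (g n) <= b n) -> Rabs (MC_E N g) <= MC_E N b.
Proof.
  intros Hgb; unfold MC_E, Rdiv.
  rewrite Rabs_mult, (Rabs_right (/ INR N)) by (apply Rle_ge, Rlt_le, Rinv_0_lt_compat; lra).
  apply Rmult_le_compat_r; [apply Rlt_le, Rinv_0_lt_compat; lra|].
  eapply Rle_trans; [apply Rabs_sumN_le|apply sumN_le; auto].
Qed.

Lemma Rabs_MC_Eu_le (g b : nat -> R) :
  (forall n, (n < N)%nat -> Rabs (g n) <= b n) -> Rabs (MC_Eu N g) <= MC_Eu N b.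
Proof.
  intros Hgb; unfold MC_Eu, Rdiv.
  rewrite Rabs_mult, (Rabs_right (/ (INR N - 1)))
    by (apply Rle_ge, Rlt_le, Rinv_0_lt_compat; lra).
  apply Rmult_le_compat_r; [apply Rlt_le, Rinv_0_lt_compat; lra|].
  eapply Rle_trans; [apply Rabs_sumN_le|apply sumN_le; auto].
Qed.

Lemma MC_V_corrected_eq (p q d R2 R3 R4 : nat -> R) :
  MC_V N (fun n => p n - q n - d n) - MC_V N p + MC_V N q
  + MC_Eu N (fun n => 2 * (p n - q n) * (d n + q n) - R2 n)
  - MC_Eu N (fun n => MC_E N (fun n => p n - q n) * (d n + q n) - R3 n)
  - MC_E N (fun n => MC_Eu N (fun n => p n - q n) * (d n + q n) - R4 n)
  = MC_V N d - MC_Eu N (fun n => R2 n - R3 n - (INR N - 1) / INR N * R4 n).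
Proof.
  set (s := fun n => p n - q n); set (w := fun n => d n + q n).
  assert (Hvar : MC_V N (fun n => p n - q n - d n) - MC_V N p + MC_V N q
                 = MC_V N d - 2 * MC_cov s w).
  { rewrite !MC_V_minus; unfold s, w.
    rewrite MC_cov_plusr, !MC_cov_minusl, <- MC_V_cov; ring. }
  (* Since E[s] Eu[w] = Eu[s] E[w] and E = (N-1)/N Eu, the dual corrections reproduce exactly
     the cross term of the variance. *)
  assert (Hcross : MC_Eu N (fun n => 2 * (p n - q n) * (d n + q n) - R2 n)
      - MC_Eu N (fun n => MC_E N s * w n - R3 n) - MC_E N (fun n => MC_Eu N s * w n - R4 n)
      = 2 * MC_cov s w - MC_Eu N (fun n => R2 n - R3 n - (INR N - 1) / INR N * R4 n)).
  { rewrite (MC_Eu_ext _ (fun n => 2 * (s n * w n) - R2 n)) by (intros; unfold s, w; ring).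
    unfold MC_cov, MC_Eu, MC_E, Rdiv.
    rewrite !sumN_minus, !sumN_scal; field; lra. }
  cbv beta delta [s w] in *; lra.
Qed.

Lemma Rabs_MC_V_corrected_le (p q d R2 R3 R4 bsq b bW : nat -> R) :
  (forall n, (n < N)%nat -> d n ^ 2 <= bsq n) ->
  (forall n, (n < N)%nat -> Rabs (d n) <= b n) ->
  (forall n, (n < N)%nat -> Rabs (R2 n - R3 n - (INR N - 1) / INR N * R4 n) <= bW n) ->
  Rabs (MC_V N (fun n => p n - q n - d n) - MC_V N p + MC_V N q
        + MC_Eu N (fun n => 2 * (p n - q n) * (d n + q n) - R2 n)
        - MC_Eu N (fun n => MC_E N (fun n => p n - q n) * (d n + q n) - R3 n)
        - MC_E N (fun n => MC_Eu N (fun n => p n - q n) * (d n + q n) - R4 n))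
  <= MC_Eu N bsq + MC_E N b * MC_Eu N b + MC_Eu N bW.
Proof.
  intros Hsq Hb HbW.
  rewrite MC_V_corrected_eq; unfold MC_V.
  assert (Hd2 : Rabs (MC_Eu N (fun n => d n ^ 2)) <= MC_Eu N bsq).
  { apply Rabs_MC_Eu_le; intros n Hn.
    rewrite Rabs_right by (apply Rle_ge, pow2_ge_0); auto. }
  assert (Hdd : Rabs (MC_Eu N d * MC_E N d) <= MC_E N b * MC_Eu N b).
  { rewrite Rabs_mult, Rmult_comm.
    apply Rmult_le_compat; auto using Rabs_pos, Rabs_MC_E_le, Rabs_MC_Eu_le. }
  pose proof (Rabs_MC_Eu_le _ _ HbW) as HW.
  unfold Rminus at 1 2; eapply Rle_trans; [apply Rabs_triang|].
  rewrite Rabs_Ropp; eapply Rle_trans; [apply Rplus_le_compat_r, Rabs_triang|].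
  rewrite Rabs_Ropp; lra.
Qed.

End MonteCarlo.

Lemma Rsup_is_lub (E : R -> Prop) : bound E -> (exists x, E x) -> is_lub E (Rsup E).
Proof.
  intros Hb Hne; destruct (completeness E Hb Hne) as [m Hm].
  exact (epsilon_spec (inhabits 0) (is_lub E) (ex_intro _ m Hm)).
Qed.

Section HilbertForms.

Context {X : Hilbert}.

Definition bounded_form (F : X -> R) : Prop :=
  exists C, forall v, Rabs (F v) <= C * hnorm v.

Lemma hinner_0l (y : X) : hinner hzero y = 0.
Proof. pose proof (hinner_add_l X hzero hzero y) as H; rewrite hadd_0 in H; lra. Qed.

Lemma hnorm_0 : hnorm (@hzero X) = 0.
Proof. unfold hnorm; rewrite hinner_0l; apply sqrt_0. Qed.

Lemma hnorm_gt0 (v : X) : v <> hzero -> 0 < hnorm v.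
Proof.
  intros Hv; apply sqrt_lt_R0.
  destruct (hinner_nonneg X v) as [|E]; [assumption|].
  exfalso; apply Hv, hinner_def; auto.
Qed.

Lemma linear_form_0 (F : X -> R) : is_linear_form F -> F hzero = 0.
Proof. intros [Hadd _]; pose proof (Hadd hzero hzero) as H; rewrite hadd_0 in H; lra. Qed.

Lemma linear_form_minus (F : X -> R) (x y : X) :
  is_linear_form F -> F (hadd x (hopp y)) = F x - F y.
Proof.
  intros HF; pose proof (linear_form_0 F HF) as H0; destruct HF as [Hadd _].
  pose proof (Hadd y (hopp y)) as Hy; rewrite hadd_opp in Hy.
  rewrite Hadd; lra.
Qed.

Lemma bounded_linear_form_bounded (F : X -> R) : bounded_linear_form F -> bounded_form F.
Proof. intros [_ H]; exact H. Qed.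

Lemma bounded_form_minus (F G : X -> R) :
  bounded_form F -> bounded_form G -> bounded_form (fun v => F v - G v).
Proof.
  intros [C1 H1] [C2 H2]; exists (C1 + C2); intros v.
  eapply Rle_trans; [apply Rabs_triang|]; rewrite Rabs_Ropp.
  specialize (H1 v); specialize (H2 v); lra.
Qed.

Lemma bounded_form_scal (k : R) (F : X -> R) :
  bounded_form F -> bounded_form (fun v => k * F v).
Proof.
  intros [C H]; exists (Rabs k * C); intros v; rewrite Rabs_mult, Rmult_assoc.
  apply Rmult_le_compat_l; auto using Rabs_pos.
Qed.

Lemma bounded_form_opp (F : X -> R) : bounded_form F -> bounded_form (fun v => - F v).
Proof. intros [C H]; exists C; intros v; rewrite Rabs_Ropp; auto. Qed.

Lemma bounded_bilinear_form_l (a : X -> X -> R) (w : X) :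
  bounded_bilinear_form a -> bounded_form (fun v => a v w).
Proof. intros [_ [_ [C H]]]; exists (C * hnorm w); intros v; rewrite (H v w); lra. Qed.

Lemma bounded_bilinear_form_r (a : X -> X -> R) (w : X) :
  bounded_bilinear_form a -> bounded_form (fun v => a w v).
Proof. intros [_ [_ [C H]]]; exists (C * hnorm w); intros v; rewrite (H w v); lra. Qed.

Let dual_norm_lub (F : X -> R) : bounded_form F ->
  is_lub (fun t => t = 0 \/ exists v : X, v <> hzero /\ t = Rabs (F v) / hnorm v)
         (dual_norm F).
Proof.
  intros [C HC]; apply Rsup_is_lub; [|exists 0; left; reflexivity].
  exists (Rmax C 0); intros t [->|[v [Hv ->]]]; [apply Rmax_r|].
  pose proof (hnorm_gt0 v Hv).
  apply Rle_trans with C; [|apply Rmax_l].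
  apply Rmult_le_reg_r with (hnorm v); auto.
  unfold Rdiv; rewrite Rmult_assoc, Rinv_l, Rmult_1_r by lra; auto.
Qed.

Lemma dual_norm_ge0 (F : X -> R) : bounded_form F -> 0 <= dual_norm F.
Proof. intros HF; apply (dual_norm_lub F HF); left; reflexivity. Qed.

Lemma Rabs_le_dual_norm (F : X -> R) (v : X) :
  bounded_form F -> Rabs (F v) <= dual_norm F * hnorm v.
Proof.
  intros HF; destruct (classic (v = hzero)) as [->|Hv].
  - destruct HF as [C HC]; specialize (HC hzero); rewrite hnorm_0 in *; lra.
  - pose proof (hnorm_gt0 v Hv).
    assert (Rabs (F v) / hnorm v <= dual_norm F) by (apply (dual_norm_lub F HF); right; eauto).
    apply Rmult_le_reg_r with (/ hnorm v); [apply Rinv_0_lt_compat; auto|].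
    rewrite Rmult_assoc, Rinv_r, Rmult_1_r by lra; auto.
Qed.

Lemma coercivity_factor_le (a : X -> X -> R) (v : X) :
  (forall w, is_linear_form (fun u => a u w)) -> coercive a ->
  coercivity_factor a * hnorm v ^ 2 <= a v v.
Proof.
  intros Hlin [c [Hc Hcv]]; destruct (classic (v = hzero)) as [->|Hv].
  { rewrite hnorm_0, (linear_form_0 _ (Hlin hzero)); lra. }
  set (E := fun t => exists v : X, v <> hzero /\ t = - (a v v / hnorm v ^ 2)).
  assert (HE : is_lub E (Rsup E)).
  { apply Rsup_is_lub; [|exists (- (a v v / hnorm v ^ 2)); exists v; auto].
    exists (- c); intros t [w [Hw ->]].
    assert (0 < hnorm w ^ 2) by (apply pow_lt, hnorm_gt0, Hw).
    specialize (Hcv w); apply Ropp_le_contravar.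
    apply Rmult_le_reg_r with (hnorm w ^ 2); auto.
    unfold Rdiv; rewrite Rmult_assoc, Rinv_l by lra; lra. }
  pose proof (hnorm_gt0 v Hv) as Hvpos.
  assert (- (a v v / hnorm v ^ 2) <= Rsup E) by (apply HE; exists v; auto).
  unfold coercivity_factor; fold E.
  replace (a v v) with (a v v / hnorm v ^ 2 * hnorm v ^ 2) by (field; lra).
  apply Rmult_le_compat_r; [apply pow_le|]; lra.
Qed.

Lemma hnorm_le_dual_norm_div (a : X -> X -> R) (r : X -> R) (e : X) :
  (forall w, is_linear_form (fun u => a u w)) -> coercive a -> 0 < coercivity_factor a ->
  bounded_form r -> a e e = r e -> hnorm e <= dual_norm r / coercivity_factor a.
Proof.
  intros Hlin Hco Halpha Hr Hee.
  pose proof (coercivity_factor_le a e Hlin Hco) as Hc.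
  pose proof (Rabs_le_dual_norm r e Hr) as Hre; pose proof (Rle_abs (r e)).
  apply Rmult_le_reg_l with (coercivity_factor a); auto.
  replace (coercivity_factor a * (dual_norm r / coercivity_factor a)) with (dual_norm r)
    by (field; lra).
  destruct (Rle_lt_or_eq_dec 0 (hnorm e) (sqrt_pos _)) as [Hpos|Hz].
  - apply Rmult_le_reg_r with (hnorm e); auto; simpl in Hc; nra.
  - rewrite <- Hz, Rmult_0_r; apply dual_norm_ge0, Hr.
Qed.

End HilbertForms.

Section GalerkinError.

Variables (X : Hilbert) (a : X -> X -> R) (f l : X -> R) (u uR : X).
Hypotheses (Ha : bounded_bilinear_form a) (Hco : coercive a)
  (Halpha : 0 < coercivity_factor a) (Hf : bounded_linear_form f)
  (Hl : bounded_linear_form l) (Hu : forall v, a u v = f v).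

Local Notation e := (hadd u (hopp uR)).

Lemma galerkin_error_eq (v : X) : a e v = f v - a uR v.
Proof.
  destruct Ha as [Hlin _].
  rewrite (linear_form_minus (fun w => a w v) u uR (Hlin v)), Hu; reflexivity.
Qed.

Lemma bounded_dual_residual (L : X -> R) (w : X) :
  bounded_form L -> bounded_form (fun v => - L v - a v w).
Proof.
  intros HL; apply bounded_form_minus;
    [apply bounded_form_opp, HL | apply bounded_bilinear_form_l, Ha].
Qed.

Lemma l_error_decomposition (w1 : X) :
  l u = l uR - (f w1 - a uR w1) - (- l e - a e w1).
Proof.
  rewrite (linear_form_minus l u uR (proj1 Hl)), galerkin_error_eq; ring.
Qed.

Lemma residual_dual_decomposition (k : R) (w1 w : X) :
  f w - a uR w = k * ((- l e - a e w1) + (f w1 - a uR w1)) - (- (k * l e) - a e w).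
Proof. rewrite !galerkin_error_eq; ring. Qed.

Lemma Rabs_form_error_le (F : X -> R) :
  bounded_form F ->
  Rabs (F e) <= dual_norm F * dual_norm (fun v => f v - a uR v) / coercivity_factor a.
Proof.
  intros HF.
  assert (Hr : bounded_form (fun v => f v - a uR v)).
  { apply bounded_form_minus;
      [apply bounded_linear_form_bounded, Hf | apply bounded_bilinear_form_r, Ha]. }
  eapply Rle_trans; [apply Rabs_le_dual_norm, HF|].
  unfold Rdiv; rewrite Rmult_assoc; apply Rmult_le_compat_l; [apply dual_norm_ge0, HF|].
  apply hnorm_le_dual_norm_div; auto; [apply Ha | apply galerkin_error_eq].
Qed.

End GalerkinError.

Theorem mainTheorem4
  (X : Hilbert) (K Pd : nat)
  (Xi : (Fin.t K -> R) -> Prop) (Pset : (Fin.t Pd -> R) -> Prop)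
  (a : (Fin.t K -> R) -> (Fin.t Pd -> R) -> X -> X -> R)
  (f l : (Fin.t K -> R) -> (Fin.t Pd -> R) -> X -> R)
  (Ha : forall y mu, Xi y -> Pset mu ->
          bounded_bilinear_form (a y mu) /\ coercive (a y mu) /\
          0 < coercivity_factor (a y mu))
  (Hf : forall y mu, Xi y -> Pset mu -> bounded_linear_form (f y mu))
  (Hl : forall y mu, Xi y -> Pset mu -> bounded_linear_form (l y mu))
  (XR XR1 XR2 XR3 XR4 : X -> Prop)
  (HXR : is_subspace XR) (HXR1 : is_subspace XR1) (HXR2 : is_subspace XR2)
  (HXR3 : is_subspace XR3) (HXR4 : is_subspace XR4)
  (mu : Fin.t Pd -> R) (Hmu : Pset mu)
  (N : nat) (HN : (2 <= N)%nat)
  (ys : nat -> Fin.t K -> R) (Hys : forall n, (n < N)%nat -> Xi (ys n))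
  (u uR uR1 uR2 uR3 uR4 : (Fin.t K -> R) -> X) :
  let alpha := fun y => coercivity_factor (a y mu) in
  let r := fun y v => f y mu v - a y mu (uR y) v in
  let s := fun y => l y mu (uR y) - r y (uR1 y) in
  let l1 := fun y v => l y mu v in
  let l2 := fun y v => 2 * s y * l y mu v in
  let l3 := fun y v => MC_E N (fun n => s (ys n)) * l y mu v in
  let l4 := fun y v => MC_Eu N (fun n => s (ys n)) * l y mu v in
  let r1 := fun y v => - l1 y v - a y mu v (uR1 y) in
  let r2 := fun y v => - l2 y v - a y mu v (uR2 y) in
  let r3 := fun y v => - l3 y v - a y mu v (uR3 y) in
  let r4 := fun y v => - l4 y v - a y mu v (uR4 y) in
  (forall n, (n < N)%nat -> forall v, a (ys n) mu (u (ys n)) v = f (ys n) mu v) ->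
  (forall n, (n < N)%nat -> XR (uR (ys n)) /\
     forall v, XR v -> a (ys n) mu (uR (ys n)) v = f (ys n) mu v) ->
  (forall n, (n < N)%nat -> XR1 (uR1 (ys n)) /\
     forall v, XR1 v -> a (ys n) mu v (uR1 (ys n)) = - l1 (ys n) v) ->
  (forall n, (n < N)%nat -> XR2 (uR2 (ys n)) /\
     forall v, XR2 v -> a (ys n) mu v (uR2 (ys n)) = - l2 (ys n) v) ->
  (forall n, (n < N)%nat -> XR3 (uR3 (ys n)) /\
     forall v, XR3 v -> a (ys n) mu v (uR3 (ys n)) = - l3 (ys n) v) ->
  (forall n, (n < N)%nat -> XR4 (uR4 (ys n)) /\
     forall v, XR4 v -> a (ys n) mu v (uR4 (ys n)) = - l4 (ys n) v) ->
  Rabs (MC_V N (fun n => l (ys n) mu (u (ys n)))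
        - MC_V N (fun n => l (ys n) mu (uR (ys n)))
        + MC_V N (fun n => r (ys n) (uR1 (ys n)))
        + MC_Eu N (fun n => r (ys n) (uR2 (ys n)))
        - MC_Eu N (fun n => r (ys n) (uR3 (ys n)))
        - MC_E N (fun n => r (ys n) (uR4 (ys n))))
  <= MC_Eu N (fun n => dual_norm (r (ys n)) ^ 2 * dual_norm (r1 (ys n)) ^ 2
                       / alpha (ys n) ^ 2)
     + MC_E N (fun n => dual_norm (r (ys n)) * dual_norm (r1 (ys n)) / alpha (ys n))
       * MC_Eu N (fun n => dual_norm (r (ys n)) * dual_norm (r1 (ys n)) / alpha (ys n))
     + MC_Eu N (fun n =>
          dual_norm (fun v => r2 (ys n) v - r3 (ys n) v
                              - (INR N - 1) / INR N * r4 (ys n) v)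
          * dual_norm (r (ys n)) / alpha (ys n)).
Proof.
  intros alpha r s l1 l2 l3 l4 r1 r2 r3 r4 Hu _ _ _ _ _.
  assert (Hsample : forall n, (n < N)%nat ->
    bounded_bilinear_form (a (ys n) mu) /\ coercive (a (ys n) mu) /\ 0 < alpha (ys n) /\
    bounded_linear_form (f (ys n) mu) /\ bounded_linear_form (l (ys n) mu)).
  { intros n Hn; destruct (Ha _ _ (Hys n Hn) Hmu) as (? & ? & ?).
    split; [|split; [|split; [|split]]]; auto. }
  set (e := fun n => hadd (u (ys n)) (hopp (uR (ys n)))).
  set (p := fun n => l (ys n) mu (uR (ys n))).
  set (q := fun n => r (ys n) (uR1 (ys n))).
  set (d := fun n => r1 (ys n) (e n)).
  assert (Hlu : forall n, (n < N)%nat -> l (ys n) mu (u (ys n)) = p n - q n - d n).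
  { intros n Hn; destruct (Hsample n Hn) as (Hab & _ & _ & _ & Hln).
    apply (l_error_decomposition _ _ _ _ _ (uR (ys n))); auto. }
  assert (Hres : forall n, (n < N)%nat -> forall (k : R) (w : X),
    r (ys n) w = k * (d n + q n) - (- (k * l (ys n) mu (e n)) - a (ys n) mu (e n) w)).
  { intros n Hn k w; destruct (Hsample n Hn) as (Hab & _).
    apply residual_dual_decomposition; auto. }
  rewrite (MC_V_ext N _ (fun n => p n - q n - d n)) by exact Hlu.
  rewrite (MC_Eu_ext N (fun n => r (ys n) (uR2 (ys n)))
    (fun n => 2 * (p n - q n) * (d n + q n) - r2 (ys n) (e n))) by (intros n Hn; apply Hres, Hn).
  rewrite (MC_Eu_ext N (fun n => r (ys n) (uR3 (ys n)))
    (fun n => MC_E N (fun n => p n - q n) * (d n + q n) - r3 (ys n) (e n)))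
    by (intros n Hn; apply Hres, Hn).
  rewrite (MC_E_ext N (fun n => r (ys n) (uR4 (ys n)))
    (fun n => MC_Eu N (fun n => p n - q n) * (d n + q n) - r4 (ys n) (e n)))
    by (intros n Hn; apply Hres, Hn).
  assert (Hd : forall n, (n < N)%nat ->
    Rabs (d n) <= dual_norm (r (ys n)) * dual_norm (r1 (ys n)) / alpha (ys n)).
  { intros n Hn; destruct (Hsample n Hn) as (Hab & Hco & Halpha & Hfn & Hln).
    rewrite (Rmult_comm (dual_norm (r (ys n)))).
    apply Rabs_form_error_le; auto.
    apply bounded_dual_residual, bounded_linear_form_bounded; auto. }
  apply Rabs_MC_V_corrected_le; auto.
  - intros n Hn; destruct (Hsample n Hn) as (_ & _ & Halpha & _).
    replace (dual_norm (r (ys n)) ^ 2 * dual_norm (r1 (ys n)) ^ 2 / alpha (ys n) ^ 2)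
      with ((dual_norm (r (ys n)) * dual_norm (r1 (ys n)) / alpha (ys n)) ^ 2)
      by (field; lra).
    rewrite <- (pow2_abs (d n)); apply pow_incr; split; [apply Rabs_pos | auto].
  - intros n Hn; destruct (Hsample n Hn) as (Hab & Hco & Halpha & Hfn & Hln).
    apply Rabs_form_error_le with
      (F := fun v => r2 (ys n) v - r3 (ys n) v - (INR N - 1) / INR N * r4 (ys n) v); auto.
    apply bounded_form_minus; [apply bounded_form_minus | apply bounded_form_scal];
      apply bounded_dual_residual, bounded_form_scal, bounded_linear_form_bounded; auto.
Qed.
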